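(* For every $g\in G(\Gamma)$, the number of walls in $\mathbb{W}$ separating $e$ and $g$ equals $2|g|_r$; that is, $d_{\mathbb{W}}(e,g)=2|g|_r$.
   Context: $G(\Gamma)$ is the graph product of groups $\{G_v\}_{v\in\Gamma}$ over a finite simplicial graph $\Gamma$, with reduced word length $|\cdot|_r$ (length of a word in the vertex groups that cannot be shortened by swapping consecutive syllables from adjacent vertex groups, merging consecutive syllables from the same vertex group, or deleting identities). For $v\in\Gamma$, $\mathbb{A}_v=\{g:\exists g_v\in G_v,\ |g_vg|_r<|g|_r\}$, and $\mathbb{W}=\{k\mathbb{A}_v:k\in G(\Gamma),v\in\Gamma\}$, each $k\mathbb{A}_v$ regarded as the wall $(k\mathbb{A}_v,G(\Gamma)\setminus k\mathbb{A}_v)$ (distinct sets counted once). A wall separates $x,y$ if one lies in $k\mathbb{A}_v$ and the other in its complement; $d_{\mathbb{W}}(x,y)$ is the number of walls in $\mathbb{W}$ separating $x$ and $y$. *)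

From Stdlib Require Import Relations List.
From mathcomp Require Import all_boot.
Set Implicit Arguments. Unset Strict Implicit. Unset Printing Implicit Defensive.

Record Grp := {
  gcar :> Type;
  gmul : gcar -> gcar -> gcar;
  gone : gcar;
  ginv : gcar -> gcar;
  gmulA : forall x y z, gmul x (gmul y z) = gmul (gmul x y) z;
  gmul1l : forall x, gmul gone x = x;
  gmulVl : forall x, gmul (ginv x) x = gone }.

Section GraphProduct.
Variables (V : finType) (E : rel V) (G : V -> Grp).

Definition syl := {v : V & gcar (G v)}.
Definition mk_syl (v : V) (x : gcar (G v)) : syl := existT (fun v => gcar (G v)) v x.
(* words in the vertex groups; elements of G(Gamma) are represented by words *)
Definition word := seq syl.

Inductive step : word -> word -> Prop :=
| st_swap (w1 w2 : word) (a b : syl) :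
    E (tag a) (tag b) -> step (w1 ++ a :: b :: w2) (w1 ++ b :: a :: w2)
| st_merge (w1 w2 : word) (v : V) (x y : gcar (G v)) :
    step (w1 ++ mk_syl x :: mk_syl y :: w2) (w1 ++ mk_syl (gmul x y) :: w2)
| st_del (w1 w2 : word) (v : V) :
    step (w1 ++ mk_syl (gone (G v)) :: w2) (w1 ++ w2).

(* two words represent the same element of G(Gamma) *)
Definition wequiv : word -> word -> Prop := clos_refl_sym_trans word step.
Definition reduces : word -> word -> Prop := clos_refl_trans word step.
Definition reduced (w : word) : Prop := forall w', reduces w w' -> size w <= size w'.
Definition rlen (g : word) (n : nat) : Prop :=
  exists w, [/\ reduced w, wequiv w g & size w = n].

(* group operations on words: product = concatenation, identity = [::] *)
Definition winv (w : word) : word :=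
  rev (map (fun s : syl => mk_syl (ginv (tagged s))) w).

Definition inA (v : V) (g : word) : Prop :=
  exists (x : gcar (G v)) (n m : nat), [/\ rlen (mk_syl x :: g) n, rlen g m & n < m].

(* x \in k A_v  iff  k^-1 x \in A_v ; a wall is indexed by (k, v) *)
Definition in_wall (p : word * V) (x : word) : Prop := inA p.2 (winv p.1 ++ x).
Definition same_wall (p q : word * V) : Prop := forall x, in_wall p x <-> in_wall q x.
Definition separates (p : word * V) (x y : word) : Prop := ~ (in_wall p x <-> in_wall p y).

Fixpoint distinct_walls (L : seq (word * V)) : Prop :=
  match L with
  | [::] => True
  | p :: L' => (forall q, List.In q L' -> ~ same_wall p q) /\ distinct_walls L'
  end.

Definition dW (x y : word) (n : nat) : Prop :=
  exists L : seq (word * V),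
    [/\ size L = n,
        forall p, List.In p L -> separates p x y,
        distinct_walls L &
        forall p, separates p x y -> exists2 q, List.In q L & same_wall p q].

End GraphProduct.

(* Graph products act on Crisp-Godelle-Wiest piles, and the pile of a word is
   invariant under the moves.  A word is reduced iff no syllable is lost when
   its pile is built, and [g] lies in [A_v] iff the stack of [v] in the pile of
   [g] has a syllable on top.  Induct along a reduced word [w = w0 x] with [x]
   in [G_v]: only the walls [w0 A_v] and [w A_v] separate [w0] from [w];
   neither separates [e] from [w0] and both separate [e] from [w], so each
   letter contributes exactly two separating walls. *)

From Stdlib Require Import Relations ClassicalEpsilon FunctionalExtensionality.
From Stdlib Require List.
From mathcomp Require Import all_boot.
Set Implicit Arguments. Unset Strict Implicit. Unset Printing Implicit Defensive.

Section GroupFacts.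
Variable H : Grp.
Local Notation "x * y" := (gmul x y).
Local Notation one := (gone H).

Lemma gmulV (x : H) : x * ginv x = one.
Proof.
have e : x * ginv x = ginv (ginv x) * ginv x * (x * ginv x).
  by rewrite gmulVl gmul1l.
by rewrite e -gmulA (gmulA (ginv x)) gmulVl gmul1l gmulVl.
Qed.

Lemma gmul1r (x : H) : x * one = x.
Proof. by rewrite -(gmulVl x) gmulA gmulV gmul1l. Qed.

Lemma ginvK (x : H) : ginv (ginv x) = x.
Proof. by rewrite -(gmul1r (ginv (ginv x))) -(gmulVl x) gmulA gmulVl gmul1l. Qed.

Lemma ginv1 : ginv one = one.
Proof. by rewrite -{2}(gmulVl one) gmul1r. Qed.

Lemma ginvM (x y : H) : ginv (x * y) = ginv y * ginv x.
Proof.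
have e : (x * y) * (ginv y * ginv x) = one.
  by rewrite -gmulA (gmulA y) gmulV gmul1l gmulV.
by rewrite -[ginv (x * y)]gmul1r -e gmulA gmulVl gmul1l.
Qed.

Lemma ginv_neq1 (x : H) : x <> one -> ginv x <> one.
Proof. by move=> nx e; apply: nx; rewrite -(ginvK x) e ginv1. Qed.

End GroupFacts.

Section Piles.
Variables (V : finType) (E : rel V) (G : V -> Grp).
Hypotheses (Esym : symmetric E) (Eirr : irreflexive E).

Local Notation syl := (syl G).
Local Notation word := (word G).
Local Notation reduces := (reduces E).

(* Vertex groups need not have decidable equality, hence the classical test. *)
Definition is_one (v : V) (x : G v) : bool :=
  if excluded_middle_informative (x = gone (G v)) then true else false.

Lemma is_oneP v (x : G v) : reflect (x = gone (G v)) (is_one x).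
Proof. by rewrite /is_one; case: excluded_middle_informative => h; constructor. Qed.

Lemma is_one1 v : is_one (gone (G v)).
Proof. exact/is_oneP. Qed.

Lemma is_oneV v (x : G v) : ~~ is_one x -> ~~ is_one (ginv x).
Proof. by move/is_oneP=> nx; apply/is_oneP; apply: ginv_neq1. Qed.

(* Piles (Crisp-Godelle-Wiest): one stack per vertex. Pushing a syllable of
   [v] puts it on stack [v] and a blocking marker [None] on the stack of every
   vertex that is neither [v] nor adjacent to [v]. *)
Definition pile := forall v : V, seq (option (G v)).
Definition pile0 : pile := fun v => [::].

Definition push (v : V) (x : G v) (P : pile) : pile :=
  dfwith (fun w => if ~~ E v w then None :: P w else P w) (Some x :: P v).
Definition pop (v : V) (P : pile) : pile :=
  fun w => if ~~ E v w then behead (P w) else P w.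
Definition top (P : pile) v : option (G v) := head None (P v).
Definition topped (P : pile) v : bool := if top P v is Some _ then true else false.

Definition push_nt (v : V) (x : G v) (P : pile) : pile :=
  if is_one x then P else push x P.

(* Left multiplication by a syllable. *)
Definition pact (v : V) (x : G v) (P : pile) : pile :=
  if is_one x then P else
  match top P v with
  | Some y => push_nt (gmul x y) (pop v P)
  | None => push x P
  end.

Definition pacts (w : word) (P : pile) : pile :=
  foldr (fun s Q => pact (tagged s) Q) P w.
Definition pile_of (w : word) : pile := pacts w pile0.

Inductive valid_pile : pile -> Prop :=
| valid0 : valid_pile pile0
| valid_push v (x : G v) P :
    valid_pile P -> ~~ is_one x -> ~~ topped P v -> valid_pile (push x P).

Lemma E_neq v w : E v w -> v != w.
Proof. by move=> e; apply: contraTneq e => ->; rewrite Eirr. Qed.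

Lemma push_v v (x : G v) P : push x P v = Some x :: P v.
Proof. by rewrite /push dfwith_in. Qed.

Lemma push_w v (x : G v) P w :
  v != w -> push x P w = if ~~ E v w then None :: P w else P w.
Proof. by move=> h; rewrite /push dfwith_out. Qed.

Lemma push_adj v (x : G v) P w : E v w -> push x P w = P w.
Proof. by move=> h; rewrite push_w ?E_neq // h. Qed.

Lemma pop_push v (x : G v) P : pop v (push x P) = P.
Proof.
apply: functional_extensionality_dep => w; rewrite /pop.
case: (eqVneq v w) => [<-|ne]; first by rewrite Eirr push_v.
by rewrite push_w //; case: (E v w).
Qed.

Lemma push_comm v w (x : G v) (y : G w) P : E v w ->
  push x (push y P) = push y (push x P).
Proof.
move=> evw; have ewv : E w v by rewrite Esym.
apply: functional_extensionality_dep => u.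
case: (eqVneq v u) => [<-|nvu].
  by rewrite [LHS]push_v [RHS]push_adj // [in RHS]push_v push_adj.
case: (eqVneq w u) => [<-|nwu].
  by rewrite [LHS]push_adj // [LHS]push_v [RHS]push_v push_adj.
by rewrite !push_w //; case: (E v u); case: (E w u).
Qed.

Lemma topped_push v (x : G v) P : topped (push x P) v.
Proof. by rewrite /topped /top push_v. Qed.

Lemma topped_push_adj v (x : G v) P w : E v w -> topped (push x P) w = topped P w.
Proof. by move=> h; rewrite /topped /top push_adj. Qed.

Lemma topped_push_nadj v (x : G v) P w :
  v != w -> ~~ E v w -> topped (push x P) w = false.
Proof. by move=> h1 h2; rewrite /topped /top push_w // h2. Qed.

Lemma push_nt_push_comm v w (x : G v) (y : G w) R : E v w ->
  push_nt x (push y R) = push y (push_nt x R).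
Proof. by move=> e; rewrite /push_nt; case: (is_one x) => //; rewrite push_comm. Qed.

Lemma push_nt_comm v w (x : G v) (y : G w) R : E v w ->
  push_nt x (push_nt y R) = push_nt y (push_nt x R).
Proof.
by move=> e; rewrite /push_nt; case: (is_one x); case: (is_one y) => //; apply: push_comm.
Qed.

Lemma topped_push_nt_adj v (x : G v) R w : E v w -> topped (push_nt x R) w = topped R w.
Proof. by move=> e; rewrite /push_nt; case: (is_one x) => //; rewrite topped_push_adj. Qed.

Lemma valid_push_nt v (x : G v) Q : valid_pile Q -> ~~ topped Q v -> valid_pile (push_nt x Q).
Proof. by rewrite /push_nt; case: (boolP (is_one x)) => // nx vQ nT; apply: valid_push. Qed.

(* Only syllables of vertices adjacent to [v] were pushed after the top
   syllable of stack [v], so that syllable commutes to the top of the pile. *)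
Lemma topped_decomp P v : valid_pile P -> topped P v ->
  exists (z : G v) (Q : pile),
    [/\ P = push z Q, valid_pile Q, ~~ topped Q v & ~~ is_one z].
Proof.
elim=> [|w y Q vQ IH ny nT]; first by rewrite /topped /top.
case: (eqVneq w v) => [e|ne]; first by subst w => _; exists y, Q.
case evw: (E w v); last by rewrite topped_push_nadj ?evw.
rewrite topped_push_adj // => /IH [z [Q' [eQ vQ' nT' nz]]].
have evw' : E v w by rewrite Esym.
exists z, (push y Q'); split => //.
- by rewrite eQ push_comm.
- by apply: valid_push => //; rewrite -(topped_push_adj z Q' evw') -eQ.
- by rewrite topped_push_adj.
Qed.

Lemma pact1 v (x : G v) P : is_one x -> pact x P = P.
Proof. by rewrite /pact => ->. Qed.

Lemma pact_untopped v (x : G v) P : ~~ topped P v -> pact x P = push_nt x P.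
Proof. by rewrite /pact /push_nt /topped; case: (is_one x) => //; case: (top P v). Qed.

Lemma pact_push v (x : G v) z Q : ~~ is_one x -> pact x (push z Q) = push_nt (gmul x z) Q.
Proof. by move=> nx; rewrite /pact (negbTE nx) /top push_v /= pop_push. Qed.

Lemma valid_pact v (x : G v) P : valid_pile P -> valid_pile (pact x P).
Proof.
move=> vP; case: (boolP (is_one x)) => [h|nx]; first by rewrite pact1.
case: (boolP (topped P v)) => [T|nT]; last by rewrite pact_untopped //; apply: valid_push_nt.
have [z [Q [-> vQ nTQ nz]]] := topped_decomp vP T.
by rewrite pact_push //; apply: valid_push_nt.
Qed.

Lemma valid_pacts w P : valid_pile P -> valid_pile (pacts w P).
Proof. by elim: w => //= a w IH vP; apply: valid_pact; apply: IH. Qed.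

Lemma valid_pile_of w : valid_pile (pile_of w).
Proof. exact: valid_pacts valid0. Qed.

Lemma pactM_untopped v (x y : G v) P : ~~ topped P v ->
  pact x (pact y P) = pact (gmul x y) P.
Proof.
move=> nT; case: (boolP (is_one y)) => [/is_oneP ->|ny].
  by rewrite gmul1r (pact1 _ (is_one1 v)).
case: (boolP (is_one x)) => [/is_oneP ->|nx]; first by rewrite gmul1l pact1 ?is_one1.
rewrite [pact y P]pact_untopped // /push_nt (negbTE ny).
by rewrite pact_push // pact_untopped.
Qed.

Lemma pactM v (x y : G v) P : valid_pile P -> pact x (pact y P) = pact (gmul x y) P.
Proof.
move=> vP; case: (boolP (topped P v)) => [T|]; last exact: pactM_untopped.
case: (boolP (is_one x)) => [/is_oneP ->|nx]; first by rewrite gmul1l pact1 ?is_one1.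
case: (boolP (is_one y)) => [/is_oneP ->|ny]; first by rewrite gmul1r (pact1 _ (is_one1 v)).
have [z [Q [-> vQ nTQ nz]]] := topped_decomp vP T.
rewrite (pact_push _ _ ny) /push_nt.
case: (boolP (is_one (gmul y z))) => [/is_oneP yz1|yz].
  rewrite pact_untopped //.
  case: (boolP (is_one (gmul x y))) => [/is_oneP xy1|xy].
    have exz : x = z by rewrite -(gmul1r x) -yz1 gmulA xy1 gmul1l.
    by rewrite pact1 ?xy1 ?is_one1 // exz /push_nt (negbTE nz).
  by rewrite pact_push // -gmulA yz1 gmul1r.
rewrite pact_push // gmulA.
case: (boolP (is_one (gmul x y))) => [xy1|xy]; last by rewrite pact_push.
by rewrite pact1 // (is_oneP _ xy1) gmul1l /push_nt (negbTE nz).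
Qed.

Lemma pact_comm_topped v w (x : G v) (y : G w) P : valid_pile P -> E v w -> topped P v ->
  ~~ is_one x -> ~~ is_one y -> pact x (pact y P) = pact y (pact x P).
Proof.
move=> vP evw T nx ny; have ewv : E w v by rewrite Esym.
have [z [Q [eP vQ nTQ nz]]] := topped_decomp vP T.
have TPw : topped P w = topped Q w by rewrite eP topped_push_adj.
case: (boolP (topped P w)) => [Tw|nTw].
  have [t [R [eQ vR nTR nt]]] := topped_decomp vQ (etrans (esym TPw) Tw).
  rewrite eP eQ [in LHS]push_comm // [in LHS](pact_push _ _ ny).
  rewrite [in LHS]push_nt_push_comm // [in LHS]pact_push // [in RHS]pact_push //.
  by rewrite [in RHS]push_nt_push_comm // [in RHS]pact_push // push_nt_comm.
rewrite [pact y P]pact_untopped // /push_nt (negbTE ny) eP push_comm // pact_push //.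
rewrite [pact x _]pact_push // pact_untopped; last by rewrite topped_push_nt_adj // -TPw.
by rewrite /push_nt (negbTE ny); case: (is_one (gmul x z)) => //; apply: push_comm.
Qed.

Lemma pact_comm v w (x : G v) (y : G w) P : valid_pile P -> E v w ->
  pact x (pact y P) = pact y (pact x P).
Proof.
move=> vP evw; have ewv : E w v by rewrite Esym.
case: (boolP (is_one x)) => [h|nx]; first by rewrite !(pact1 _ h).
case: (boolP (is_one y)) => [h|ny]; first by rewrite !(pact1 _ h).
case: (boolP (topped P v)) => [T|nT]; first exact: pact_comm_topped.
case: (boolP (topped P w)) => [T|nTw]; first by rewrite (pact_comm_topped vP ewv).
rewrite (pact_untopped _ nT) (pact_untopped _ nTw) /push_nt (negbTE nx) (negbTE ny).
rewrite !pact_untopped ?topped_push_adj // /push_nt (negbTE nx) (negbTE ny).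
exact: push_comm.
Qed.

Lemma pacts_cons (a : syl) w P : pacts (a :: w) P = pact (tagged a) (pacts w P).
Proof. by []. Qed.

Lemma pacts_cat w1 w2 P : pacts (w1 ++ w2) P = pacts w1 (pacts w2 P).
Proof. by rewrite /pacts foldr_cat. Qed.

Lemma pacts_rcons (m : word) (s : syl) P : pacts (rcons m s) P = pacts m (pact (tagged s) P).
Proof. by rewrite -cats1 pacts_cat. Qed.

Lemma pile_of_cons (a : syl) w : pile_of (a :: w) = pact (tagged a) (pile_of w).
Proof. by []. Qed.

Lemma pile_of_cat w1 w2 : pile_of (w1 ++ w2) = pacts w1 (pile_of w2).
Proof. exact: pacts_cat. Qed.

Lemma step_pacts (a b : word) P : step E a b -> valid_pile P -> pacts a P = pacts b P.
Proof.
case=> [w1 w2 [v x] [w y] /= evw|w1 w2 v x y|w1 w2 v] vP; rewrite !pacts_cat /=.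
- by rewrite pact_comm //; apply: valid_pacts.
- by rewrite pactM //; apply: valid_pacts.
- by rewrite pact1 // is_one1.
Qed.

Lemma wequiv_pacts (a b : word) P : wequiv E a b -> valid_pile P -> pacts a P = pacts b P.
Proof.
move=> h vP; elim: h => [x y s|x|x y _ IH|x y z _ IH1 _ IH2] //.
- exact: step_pacts.
- by rewrite IH1 IH2.
Qed.

Lemma reduces_pacts (a b : word) P : reduces a b -> valid_pile P -> pacts a P = pacts b P.
Proof. by move=> h; apply: wequiv_pacts; apply: clos_rt_clos_rst. Qed.

Lemma wequiv_pile_of (a b : word) : wequiv E a b -> pile_of a = pile_of b.
Proof. by move=> h; apply: wequiv_pacts h valid0. Qed.

Lemma reduces_pile_of (a b : word) : reduces a b -> pile_of a = pile_of b.
Proof. by move=> h; apply: reduces_pacts h valid0. Qed.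

Definition pile_size (P : pile) : nat := \sum_(v : V) count isSome (P v).

Lemma pile_size0 : pile_size pile0 = 0.
Proof. by rewrite /pile_size big1. Qed.

Lemma pile_size_push v (x : G v) P : pile_size (push x P) = (pile_size P).+1.
Proof.
rewrite /pile_size (bigD1 v) //= [in RHS](bigD1 v) //= push_v /= add1n -addSn.
congr (_ + _); apply: eq_bigr => w nw; rewrite push_w 1?eq_sym //.
by case: (E v w).
Qed.

Lemma pile_size_push_nt v (x : G v) P : pile_size (push_nt x P) <= (pile_size P).+1.
Proof. by rewrite /push_nt; case: (is_one x) => //; rewrite pile_size_push. Qed.

Lemma pact_cases v (x : G v) P : valid_pile P ->
  [\/ is_one x /\ pact x P = P,
      [/\ ~~ is_one x, ~~ topped P v & pact x P = push x P] |
      topped P v /\ pile_size (pact x P) <= pile_size P].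
Proof.
move=> vP; case: (boolP (is_one x)) => [h|nx]; first by apply: Or31; rewrite pact1.
case: (boolP (topped P v)) => [T|nT].
  apply: Or33; split => //.
  have [z [Q [-> _ _ _]]] := topped_decomp vP T.
  by rewrite pact_push // pile_size_push pile_size_push_nt.
by apply: Or32; rewrite pact_untopped // /push_nt (negbTE nx).
Qed.

Lemma pile_size_pact v (x : G v) P : valid_pile P -> pile_size (pact x P) <= (pile_size P).+1.
Proof.
move=> vP; case: (pact_cases x vP) => [[_ ->]|[_ _ ->]|[_ /leqW]] //.
by rewrite pile_size_push.
Qed.

Lemma pile_size_le (w : word) : pile_size (pile_of w) <= size w.
Proof.
elim: w => [|a w IH]; first by rewrite /pile_of /= pile_size0.
exact: leq_trans (pile_size_pact _ (valid_pile_of w)) _.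
Qed.

(* A word is reduced exactly when no syllable is lost when building its pile. *)
Definition full (w : word) : bool := pile_size (pile_of w) == size w.

Lemma full_consP (a : syl) w : full (a :: w) ->
  [/\ full w, ~~ is_one (tagged a), ~~ topped (pile_of w) (tag a)
    & pile_of (a :: w) = push (tagged a) (pile_of w)].
Proof.
rewrite /full /= => /eqP h; have hw := pile_size_le w.
case: (pact_cases (tagged a) (valid_pile_of w)) => [[_ e]|[na nT e]|[_ le]].
- by move: hw; rewrite -e h ltnn.
- by move: h; rewrite e pile_size_push => -[->].
- by move: (leq_trans le hw); rewrite h ltnn.
Qed.

Lemma step_ctx (p q a b : word) : step E a b -> step E (p ++ a ++ q) (p ++ b ++ q).
Proof.
case=> [w1 w2 s t e|w1 w2 v x y|w1 w2 v]; rewrite -!catA /=.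
- by have := @st_swap _ E G (p ++ w1) (w2 ++ q) _ _ e; rewrite -!catA.
- by have := @st_merge _ E G (p ++ w1) (w2 ++ q) v x y; rewrite -!catA.
- by have := @st_del _ E G (p ++ w1) (w2 ++ q) v; rewrite -!catA.
Qed.

Lemma reduces_ctx (p q a b : word) : reduces a b -> reduces (p ++ a ++ q) (p ++ b ++ q).
Proof.
elim=> [x y s|x|x y z _ IH1 _ IH2].
- exact/rt_step/step_ctx.
- exact: rt_refl.
- exact: rt_trans IH1 IH2.
Qed.

Lemma reduces_cons (a : syl) w w' : reduces w w' -> reduces (a :: w) (a :: w').
Proof. by move=> h; have := reduces_ctx [:: a] [::] h; rewrite !cats0. Qed.

Lemma reduces_rcons (a : syl) w w' : reduces w w' -> reduces (rcons w a) (rcons w' a).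
Proof. by move=> h; have := reduces_ctx [::] [:: a] h; rewrite !cats1. Qed.

Lemma full_topped_front w v : full w -> topped (pile_of w) v ->
  exists (z : G v) u, reduces w (mk_syl z :: u) /\ (size u).+1 = size w.
Proof.
elim: w => [|[u y] w IH]; first by rewrite /pile_of /topped /top.
case/full_consP => /= hw na nT ->.
case: (eqVneq u v) => [e|ne].
  by subst u => _; exists y, w; split => //; apply: rt_refl.
case: (boolP (E u v)) => euv; last by rewrite topped_push_nadj.
rewrite topped_push_adj // => /(IH hw) [z [u0 [r sz]]].
exists z, (mk_syl y :: u0); split; last by rewrite /= sz.
apply: rt_trans (reduces_cons (mk_syl y) r) _.
exact/rt_step/(@st_swap _ E G [::] u0 (mk_syl y) (mk_syl z)).
Qed.

Lemma not_full_shrinks w : ~~ full w -> exists w', reduces w w' /\ size w' < size w.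
Proof.
elim: w => [|[v x] w IH]; first by rewrite /full /pile_of pile_size0.
case: (boolP (full w)) => [hw|/IH [w' [r s]]] hx; last first.
  by exists (mk_syl x :: w'); split => //; apply: reduces_cons.
case: (pact_cases x (valid_pile_of w)) => [[/is_oneP x1 _]|[_ _ e]|[T _]].
- by exists w; split => //; apply: rt_step; rewrite x1; apply: (@st_del _ E G [::]).
- by move: hx hw; rewrite /full /= -/(pile_of w) e pile_size_push eqSS => /negP.
- have [z [u [r s]]] := full_topped_front hw T.
  exists (mk_syl (gmul x z) :: u); split; last by rewrite /= -s.
  apply: rt_trans (reduces_cons (mk_syl x) r) _.
  exact/rt_step/(@st_merge _ E G [::]).
Qed.

Lemma full_reduced w : full w -> reduced E w.
Proof. by move=> /eqP h w' r; rewrite -h (reduces_pile_of r) pile_size_le. Qed.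

Lemma reduced_full w : reduced E w -> full w.
Proof.
by move=> rw; apply/contraT => /not_full_shrinks [w' [/rw le]]; rewrite ltnNge le.
Qed.

Lemma reduces_full w : exists r, reduces w r /\ full r.
Proof.
elim: {w}(size w) {-2}w (leqnn (size w)) => [|n IH] w hs.
  exists w; split; first exact: rt_refl.
  by case: w hs => // _; rewrite /full /pile_of pile_size0.
case: (boolP (full w)) => [hw|/not_full_shrinks [w' [r s]]].
  by exists w; split => //; apply: rt_refl.
have [r' [r2 e]] := IH w' (leq_trans s hs).
by exists r'; split => //; apply: rt_trans r r2.
Qed.

Lemma rlenE g n : rlen E g n <-> pile_size (pile_of g) = n.
Proof.
split.
  case=> w [/reduced_full /eqP rw e <-]; by rewrite -(wequiv_pile_of e).
move=> h; have [r [rd /eqP e]] := reduces_full g.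
exists r; split.
- exact/full_reduced/eqP.
- exact/rst_sym/clos_rt_clos_rst.
- by rewrite -e -(reduces_pile_of rd).
Qed.

Lemma inAE v g : inA E v g <-> topped (pile_of g) v.
Proof.
split.
  case=> x [n [m [/rlenE /= h1 /rlenE h2 lt]]].
  case: (pact_cases x (valid_pile_of g)) => [[_ e]|[_ _ e]|[T _]] //.
  - by move: lt; rewrite -h1 -h2 e ltnn.
  - by move: lt; rewrite -h1 -h2 e pile_size_push ltnNge leqnSn.
move=> T; have [z [Q [eP vQ nT nz]]] := topped_decomp (valid_pile_of g) T.
exists (ginv z), (pile_size Q), (pile_size (pile_of g)); split.
- apply/rlenE; rewrite /= eP pact_push ?is_oneV //.
  by rewrite gmulVl /push_nt is_one1.
- exact/rlenE.
- by rewrite eP pile_size_push.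
Qed.

Definition inv_syl (s : syl) : syl := mk_syl (ginv (tagged s)).

Lemma winv_cat (a b : word) : winv (a ++ b) = winv b ++ winv a.
Proof. by rewrite /winv map_cat rev_cat. Qed.

Lemma winv_cons (a : syl) (w : word) : winv (a :: w) = winv w ++ [:: inv_syl a].
Proof. by rewrite -cat1s winv_cat. Qed.

Lemma winv_rcons (a : syl) (w : word) : winv (rcons w a) = inv_syl a :: winv w.
Proof. by rewrite -cats1 winv_cat. Qed.

Lemma size_winv (w : word) : size (winv w) = size w.
Proof. by rewrite /winv size_rev size_map. Qed.

Lemma winvK (w : word) : winv (winv w) = w.
Proof. by elim: w => [|[v x] w IH] //; rewrite winv_cons winv_cat IH /= /inv_syl /= ginvK. Qed.

Lemma pacts_winvK w P : valid_pile P -> pacts (winv w) (pacts w P) = P.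
Proof.
elim: w P => [|[v x] w IH] P vP //.
rewrite winv_cons pacts_cat /= pactM; last exact: valid_pacts.
by rewrite gmulVl pact1 ?is_one1 // IH.
Qed.

Lemma pacts_Kwinv w P : valid_pile P -> pacts w (pacts (winv w) P) = P.
Proof. by move=> vP; rewrite -{1}(winvK w) pacts_winvK. Qed.

Lemma step_winv (a b : word) : step E a b -> step E (winv a) (winv b).
Proof.
case=> [w1 w2 s t e|w1 w2 v x y|w1 w2 v]; rewrite !winv_cat !winv_cons -!catA /=.
- by apply: st_swap; rewrite Esym.
- by rewrite /inv_syl /= ginvM; apply: st_merge.
- by rewrite /inv_syl /= ginv1; apply: st_del.
Qed.

Lemma reduces_winv (a b : word) : reduces a b -> reduces (winv a) (winv b).
Proof.
elim=> [x y s|x|x y z _ IH1 _ IH2].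
- exact/rt_step/step_winv.
- exact: rt_refl.
- exact: rt_trans IH1 IH2.
Qed.

Lemma full_winv (w : word) : full w -> full (winv w).
Proof.
move=> /full_reduced rw; apply: reduced_full => w' r.
by have := reduces_winv r; rewrite winvK => /rw; rewrite !size_winv.
Qed.

Definition pile_over (P B : pile) : pile := fun w => P w ++ B w.

Lemma push_over v (y : G v) P B : push y (pile_over P B) = pile_over (push y P) B.
Proof.
apply: functional_extensionality_dep => w; rewrite /pile_over.
case: (eqVneq v w) => [<-|ne]; first by rewrite !push_v.
by rewrite !push_w //; case: (E v w).
Qed.

Lemma pile0_over B : pile_over pile0 B = B.
Proof. exact: functional_extensionality_dep. Qed.

Lemma topped_over P B u :
  topped (pile_over P B) u = if P u is [::] then topped B u else topped P u.
Proof. by rewrite /topped /top /pile_over; case: (P u). Qed.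

Lemma topped_overl P B u : topped P u -> topped (pile_over P B) u.
Proof. by rewrite topped_over /topped /top; case: (P u). Qed.

Lemma topped_single v (x : G v) u : topped (push x pile0) u = (u == v).
Proof.
case: (eqVneq u v) => [->|ne]; first exact: topped_push.
by rewrite /topped /top push_w 1?eq_sym //; case: (E v u).
Qed.

Lemma pile_of_rcons (r : word) s : pile_of (rcons r s) = pacts r (pile_of [:: s]).
Proof. by rewrite -cats1 pile_of_cat. Qed.

Lemma pile_of_single v (x : G v) : ~~ is_one x -> pile_of [:: mk_syl x] = push x pile0.
Proof. by move=> nx; rewrite /pile_of /= pact_untopped // /push_nt (negbTE nx). Qed.

Lemma pact_adj u v (x : G u) Q : E u v -> pact x Q v = Q v.
Proof.
move=> e; rewrite /pact /push_nt; case: (is_one x) => //.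
case: (top Q u) => [y|]; last by rewrite push_adj.
by case: (is_one (gmul x y)); rewrite ?push_adj // /pop e.
Qed.

Definition adj_word (r : word) v : bool := all (fun a : syl => E (tag a) v) r.

Lemma pacts_adj (r : word) v Q : adj_word r v -> pacts r Q v = Q v.
Proof. by elim: r => [|a r IH] //= /andP [e h]; rewrite pact_adj // IH. Qed.

Lemma pacts_pact_adj (r : word) v (y : G v) Q : adj_word r v ->
  valid_pile Q -> pacts r (pact y Q) = pact y (pacts r Q).
Proof.
elim: r => [|a r IH] //= /andP [e h] vQ.
by rewrite IH // pact_comm //; apply: valid_pacts.
Qed.

Lemma full_empty_adj (r : word) v : full r -> pile_of r v = [::] -> adj_word r v.
Proof.
elim: r => [|a r IH] // /full_consP [hr na nT ->].
case: (eqVneq (tag a) v) => [e|ne]; first by move: (tagged a); rewrite e => y; rewrite push_v.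
case ea: (E (tag a) v); last by rewrite push_w // ea.
by rewrite push_adj // => /(IH hr) /= ->; rewrite ea.
Qed.

Definition bottom_free (r : word) v := forall x : G v, ~~ is_one x ->
  pile_of (rcons r (mk_syl x)) = pile_over (pile_of r) (push x pile0).

Lemma bottom_free0 v : bottom_free [::] v.
Proof. by move=> x nx; rewrite pile_of_single // pile0_over. Qed.

Lemma bottom_free_cons (a : syl) r v : bottom_free r v -> full (a :: r) ->
  (tag a != v) || ~~ nilp (pile_of r v) -> bottom_free (a :: r) v.
Proof.
move=> F /full_consP [_ na nT _] hb x nx.
rewrite rcons_cons !pile_of_cons F // !pact_untopped //; last first.
  rewrite topped_over; case e: (pile_of r (tag a)) => [|o c] //.
  rewrite topped_single; apply/eqP => ea.
  by move: hb e; case: a {na nT} ea => u y /= ->; rewrite eqxx /= => /nilP.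
by rewrite /push_nt (negbTE na) push_over.
Qed.

Lemma bottom_free_decomp (r : word) v : full r ->
  bottom_free r v \/ exists r' (z : G v), [/\ full r', bottom_free r' v, ~~ is_one z &
     forall Q, valid_pile Q -> pacts r Q = pacts r' (pact z Q)].
Proof.
elim: r => [|[w y] r IH] hc; first by left; apply: bottom_free0.
have [hr /= na nT ep] := full_consP hc.
case: (IH hr) => [F|[r0 [z [h0 F0 nz eq0]]]].
  case: (boolP ((w != v) || ~~ nilp (pile_of r v))) => hb; first by left; apply: bottom_free_cons.
  move: hb; rewrite negb_or !negbK => /andP [/eqP ev /nilP e]; subst w.
  right; exists r, y; split => // Q vQ.
  by rewrite /= pacts_pact_adj // full_empty_adj.
have ephi : pile_of r = pile_over (pile_of r0) (push z pile0).
  by rewrite -F0 // pile_of_rcons; apply: eq0 valid0.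
have nT0 : ~~ topped (pile_of r0) w by apply: contra nT; rewrite ephi; apply: topped_overl.
have hc0 : full (mk_syl y :: r0).
  by rewrite /full pile_of_cons pact_untopped //= /push_nt (negbTE na) pile_size_push (eqP h0).
right; exists (mk_syl y :: r0), z; split => //.
- apply: bottom_free_cons => //=; rewrite orbC -implyNb negbK; apply/implyP => /nilP e.
  by apply/eqP => ev; move: nT; subst w; rewrite ephi topped_over e topped_single eqxx.
- by move=> Q vQ; rewrite /= eq0.
Qed.

Lemma topped_rcons_full (r : word) u v (x : G v) : full r -> ~~ is_one x ->
  ~~ topped (pile_of r) u -> topped (pile_of (rcons r (mk_syl x))) u ->
  u = v /\ adj_word r v.
Proof.
move=> hr nx nT.
case: (bottom_free_decomp v hr) => [F|[r' [z [hr' F' nz eq']]]].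
  rewrite F // topped_over; case e: (pile_of r u) => [|o c]; last by move=> T; case/negP: nT.
  by rewrite topped_single => /eqP eu; subst u; split => //; apply: full_empty_adj.
have epr : pile_of r = pile_over (pile_of r') (push z pile0).
  by rewrite -F' // pile_of_rcons; apply: eq' valid0.
rewrite pile_of_rcons eq'; last exact: valid_pile_of.
rewrite [pile_of _]/= (pactM _ _ valid0).
move: nT; rewrite epr; case: (boolP (is_one (gmul z x))) => [h|h].
  by rewrite pact1 // => nT /(topped_overl (push z pile0)) T; case/negP: nT.
rewrite -[pact _ pile0]/(pile_of [:: mk_syl (gmul z x)]) -pile_of_rcons F' //.
by rewrite !topped_over; case: (pile_of r' u) => [|? ?]; rewrite ?topped_single => /negbTE ->.
Qed.

(* In group terms: if [m] is not in [A_u] but [m x] is, then [m^-1 A_u = A_v]. *)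
Lemma topped_rcons (m : word) u v (x : G v) : ~~ is_one x ->
  ~~ topped (pile_of m) u -> topped (pile_of (rcons m (mk_syl x))) u ->
  forall Q, valid_pile Q -> topped (pacts m Q) u = topped Q v.
Proof.
move=> nx nT T Q vQ; have [r [rd hr]] := reduces_full m.
rewrite (reduces_pile_of rd) in nT; rewrite (reduces_pile_of (reduces_rcons _ rd)) in T.
have [-> adj] := topped_rcons_full hr nx nT T.
by rewrite (reduces_pacts rd vQ) /topped /top pacts_adj.
Qed.

Definition in_wallb (p : word * V) (y : word) : bool :=
  topped (pacts (winv p.1) (pile_of y)) p.2.

Lemma in_wallE p y : in_wall E p y <-> in_wallb p y.
Proof. by rewrite /in_wall /in_wallb -pile_of_cat; apply: inAE. Qed.

Lemma separatesE p x y : separates E p x y <-> in_wallb p x != in_wallb p y.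
Proof.
rewrite /separates; split=> [h|/eqP h e]; last first.
  by apply: h; apply/idP/idP => /in_wallE /e /in_wallE.
by apply/eqP => e; apply: h; split=> /in_wallE; [rewrite e | rewrite -e] => /in_wallE.
Qed.

Lemma same_wallE p q : same_wall E p q <-> in_wallb p =1 in_wallb q.
Proof.
split=> h x; first by apply/idP/idP => /in_wallE /h /in_wallE.
by rewrite !in_wallE h.
Qed.

Lemma pile_of_rconsK (m : word) v (x : G v) :
  pile_of (rcons (rcons m (mk_syl x)) (mk_syl (ginv x))) = pile_of m.
Proof. by rewrite /pile_of !pacts_rcons /= (pactM _ _ valid0) gmulV pact1 ?is_one1. Qed.

Lemma same_wall_pacts k u w v :
  (forall Q, valid_pile Q -> topped (pacts (winv k ++ w) Q) u = topped Q v) ->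
  same_wall E (k, u) (w, v).
Proof.
move=> h; apply/same_wallE => y; rewrite /in_wallb /= -h; last exact/valid_pacts/valid_pile_of.
by rewrite pacts_cat pacts_Kwinv //; apply: valid_pile_of.
Qed.

Lemma in_wallb_rcons_sep (w0 : word) v (x : G v) p : ~~ is_one x ->
  in_wallb p w0 != in_wallb p (rcons w0 (mk_syl x)) ->
  same_wall E p (w0, v) \/ same_wall E p (rcons w0 (mk_syl x), v).
Proof.
case: p => k u nx; set m := winv k ++ w0.
have -> : in_wallb (k, u) w0 = topped (pile_of m) u by rewrite /in_wallb pile_of_cat.
have -> : in_wallb (k, u) (rcons w0 (mk_syl x)) = topped (pile_of (rcons m (mk_syl x))) u.
  by rewrite /in_wallb /m rcons_cat pile_of_cat.
case T1: (topped (pile_of m) u); case T2: (topped (pile_of (rcons m (mk_syl x))) u) => // _.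
  right; apply: same_wall_pacts; rewrite -rcons_cat -/m.
  by apply: topped_rcons (is_oneV nx) (negbT T2) _; rewrite pile_of_rconsK.
by left; apply: same_wall_pacts; apply: topped_rcons nx (negbT T1) T2.
Qed.

Lemma in_wallb_self k v : in_wallb (k, v) k = false.
Proof. by rewrite /in_wallb /= pacts_winvK //; apply: valid0. Qed.

Lemma in_wallb_rcons k v (x : G v) : ~~ is_one x -> in_wallb (k, v) (rcons k (mk_syl x)).
Proof.
move=> nx; rewrite /in_wallb /= pile_of_rcons pacts_winvK; last exact: valid_pile_of.
by rewrite pile_of_single // topped_push.
Qed.

Lemma in_wallb_rcons_l k v (x : G v) : ~~ is_one x -> in_wallb (rcons k (mk_syl x), v) k.
Proof.
move=> nx; rewrite /in_wallb /= winv_rcons pacts_cons pacts_winvK; last exact: valid0.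
by rewrite pact_untopped // /push_nt (negbTE (is_oneV nx)) topped_push.
Qed.

Lemma full_rconsP w0 v (x : G v) : full (rcons w0 (mk_syl x)) ->
  [/\ full w0, ~~ is_one x, ~~ in_wallb (w0, v) [::] & in_wallb (rcons w0 (mk_syl x), v) [::]].
Proof.
move=> hw; have := full_winv hw; rewrite winv_rcons => /full_consP [hw0 nx nT ep].
split.
- by rewrite -(winvK w0); apply: full_winv.
- by move: (is_oneV nx); rewrite /inv_syl /= ginvK.
- exact: nT.
- by rewrite /in_wallb /= winv_rcons -[pacts _ _]/(pile_of _) ep topped_push.
Qed.

Lemma distinct_walls_cat (L0 L1 : seq (word * V)) :
  distinct_walls E L0 -> distinct_walls E L1 ->
  (forall p q, List.In p L0 -> List.In q L1 -> ~ same_wall E p q) ->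
  distinct_walls E (L0 ++ L1).
Proof.
elim: L0 => [|p L0 IH] //= [hp d0] d1 cr; split; last first.
  by apply: IH => // p' q hp' hq; apply: cr => //; right.
move=> q /List.in_app_iff [hq|hq]; first exact: hp.
by apply: cr => //; left.
Qed.

Lemma separating_walls (w : word) : full w -> exists L : seq (word * V),
  [/\ size L = 2 * size w, forall p, List.In p L -> in_wallb p [::] != in_wallb p w,
      distinct_walls E L &
      forall p, in_wallb p [::] != in_wallb p w -> exists2 q, List.In q L & same_wall E p q].
Proof.
elim/last_ind: w => [|w0 [v x] IH] hw; first by exists [::]; split => // p; rewrite eqxx.
have [hw0 nx /negbTE nT0 T] := full_rconsP hw; set w := rcons w0 _ in hw T *.
have [L0 [sL0 sepL0 dL0 cL0]] := IH hw0.
have F1 := in_wallb_self w0 v; have F2 := in_wallb_self w v.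
have F3 : in_wallb (w0, v) w := in_wallb_rcons w0 nx.
have F4 : in_wallb (w, v) w0 := in_wallb_rcons_l w0 nx.
have old p : in_wallb p [::] != in_wallb p w0 -> in_wallb p [::] != in_wallb p w.
  case: (eqVneq (in_wallb p w0) (in_wallb p w)) => [<- //|/(in_wallb_rcons_sep nx)].
  by case=> /same_wallE e; rewrite !e ?F1 ?F4 ?nT0 ?T.
exists (L0 ++ [:: (w0, v); (w, v)]); split.
- by rewrite size_cat sL0 size_rcons /= mulnS addnC.
- move=> p /List.in_app_iff [/sepL0/old //|[<-|[<-|[]]]]; first by rewrite nT0 F3.
  by rewrite T F2.
- apply: distinct_walls_cat => //.
    by split => //= q [<-|[]] /same_wallE e; move: (e w0); rewrite F1 F4.
  move=> p q /sepL0 + [<-|[<-|[]]] /same_wallE e; rewrite !e ?F1 ?nT0 ?F4 ?T //.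
- move=> p hp; case: (boolP (in_wallb p [::] != in_wallb p w0)) => [/cL0 [q hq sq]|].
    by exists q => //; apply/List.in_app_iff; left.
  move/negPn/eqP => e; rewrite e in hp.
  case: (in_wallb_rcons_sep nx hp) => sq; [exists (w0, v) | exists (w, v)] => //;
    apply/List.in_app_iff; right; [left | right; left] => //.
Qed.

Lemma dW_full (w : word) : full w -> dW E [::] w (2 * size w).
Proof.
move=> /separating_walls [L [sL sepL dL cL]]; exists L; split => // p.
- by move=> /sepL /separatesE.
- by move=> /separatesE /cL.
Qed.

Lemma dW_wequiv (x w g : word) n : wequiv E w g -> dW E x w n -> dW E x g n.
Proof.
move=> e [L [sL sepL dL cL]].
have ew p : in_wallb p w = in_wallb p g by rewrite /in_wallb (wequiv_pile_of e).
exists L; split => // p.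
- by move=> /sepL /separatesE; rewrite ew => /separatesE.
- by move=> /separatesE; rewrite -ew => /separatesE /cL.
Qed.

End Piles.

Theorem mainTheorem11 (V : finType) (E : rel V)
  (Esym : symmetric E) (Eirr : irreflexive E) (G : V -> Grp)
  (g : word G) (n : nat) :
  rlen E g n -> dW E [::] g (2 * n).
Proof.
case=> w [/(reduced_full Esym Eirr) hw e <-].
exact: dW_wequiv e (dW_full Esym Eirr hw).
Qed.
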